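(* Let $q=2^m$ with $m$ a positive integer, let $b\in\mathbb{F}_q^*$ and $\delta\in\mathbb{F}_{q^2}\setminus\mathbb{F}_q$, and let $i$ be a non-negative integer. Put $$A=b\,\mathrm{Tr}_{q^2/q}(\delta)^{2^i},\quad B=b\,\mathrm{Tr}_{q^2/q}(\delta)^{2^i}\delta^{2q+2},\quad C=\mathrm{Tr}_{q^2/q}(\delta)^2,\quad D=1/A,$$ and define $S_{-1}=0$, $S_0=1$, $S_k=C^{2^{k-1}}S_{k-1}+D^{2^{k-1}}S_{k-2}$ for $k\geq1$. If the polynomial $$P(x)=b(x^q+x+\delta)^{2q+2^i+2}+x$$ permutes $\mathbb{F}_{q^2}$, then its compositional inverse over $\mathbb{F}_{q^2}$ is $$P^{-1}(x)=x+b\left(\delta+\sum_{k=0}^{m-1}\left(D^{2^k}S_{m-2-k}^{2^{k+1}}+D^{1-2^{k}}S_k\right)\left(x^q+x+B\right)^{2^k}\right)^{2q+2^i+2}.$$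
   Context: $\mathrm{Tr}_{q^2/q}(y)=y+y^q$. The compositional inverse of a permutation polynomial $f$ of $\mathbb{F}_{Q}$ is the unique polynomial $f^{-1}$ (modulo $x^Q-x$) with $f(f^{-1}(c))=f^{-1}(f(c))=c$ for all $c\in\mathbb{F}_Q$. *)

From HB Require Import structures.
From mathcomp Require Import all_boot all_order all_algebra all_field.
Set Implicit Arguments. Unset Strict Implicit. Unset Printing Implicit Defensive.
Import GRing.Theory.
Local Open Scope ring_scope.

Definition Tr (F : ringType) (q : nat) (y : F) : F := y + y ^+ q.

(* Shifted sequence: Sseq C D n = S_{n-1}, i.e. Sseq 0 = S_{-1} = 0,
   Sseq 1 = S_0 = 1, Sseq (n+2) = S_{n+1} = C^{2^n} S_n + D^{2^n} S_{n-1}. *)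
Fixpoint Sseq (F : ringType) (C D : F) (n : nat) {struct n} : F :=
  match n with
  | 0 => 0
  | 1 => 1
  | (n'.+1 as n1).+1 => C ^+ (2 ^ n') * Sseq C D n1 + D ^+ (2 ^ n') * Sseq C D n'
  end.

From HB Require Import structures.
From mathcomp Require Import all_boot all_order all_algebra all_field.
From mathcomp Require Import ring.
Import GRing.Theory.
Local Open Scope ring_scope.

(* Write T x = x^q + x; it maps F_{q^2} onto F_q = {z | z^q = z}, with kernel F_q.
   Expanding P gives T (P x) = L (T x) + B for the F_q-linearized polynomial
   L z = A z^4 + A C z^2 + z, and P (x + s) = P x + s for s in F_q, so the
   bijectivity of P makes L a permutation of F_q. Telescoping along the recurrence
   of S shows that the linearized polynomial M w = sum_k c_k w^(2^k) occurring in
   P^-1 satisfies M (L z) = lambda z on F_q, with lambda = S_m + D S_(m-2)^2.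
   As lambda^2 = lambda, lambda is 0 or 1. A linearized polynomial of degree < q
   vanishing on F_q is zero; if lambda = 0, this applies on L(F_q) = F_q first to M,
   which gives S_(m-1) = 0 and D S_(m-2)^2 = 1, and then to the linearized polynomial
   of the same telescoping, whose constant coefficient is D A S_0 = 1. So M inverts
   L on F_q, and P^-1 (P x) = x because delta + M (T (P x) + B) = T x + delta. *)

Set Implicit Arguments. Unset Strict Implicit.

Local Arguments Sseq : simpl never.

Definition Lpoly (F : ringType) (A C z : F) : F := A * z ^+ 4 + A * C * z ^+ 2 + z.

Definition inv_coef (F : fieldType) (C D : F) (m k : nat) : F :=
  D ^+ (2 ^ k) * Sseq C D (m - 1 - k) ^+ (2 ^ k.+1) + D ^ (1 - (2 ^ k)%:Z) * Sseq C D k.+1.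

Definition inv_lin (F : fieldType) (C D : F) (m : nat) (w : F) : F :=
  \sum_(k < m) inv_coef C D m k * w ^+ (2 ^ k).

Lemma mulVLpoly (F : fieldType) (A C z : F) :
  A != 0 -> A^-1 * Lpoly A C z = z ^+ 4 + C * z ^+ 2 + A^-1 * z.
Proof. by move=> A_neq0; rewrite /Lpoly !mulrDr !(mulrA A^-1) mulVf // !mul1r. Qed.

Lemma exprz_inv_1B (F : fieldType) (a : F) k : a != 0 -> a^-1 ^ (1 - k%:Z) = a^-1 * a ^+ k.
Proof. by move=> a_neq0; rewrite expfzDr ?invr_eq0 // -exprz_inv invrK expr1z. Qed.

Lemma exp2nS (R : ringType) (x : R) n : x ^+ (2 ^ n.+1) = x ^+ (2 ^ n) ^+ 2.
Proof. by rewrite expnSr exprM. Qed.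

Lemma exprMn_exp2nS (R : comRingType) (d s w : R) k :
  d ^+ (2 ^ k) * s ^+ (2 ^ k.+1) * w ^+ (2 ^ k) = (s ^+ 2 * (d * w)) ^+ (2 ^ k).
Proof. by rewrite exprMn (exprMn _ d) exprAC -exp2nS mulrCA mulrA. Qed.

Section Char2.
Variable F : fieldType.
Hypothesis pchar2 : 2 \in [pchar F].

Lemma exp2nD k (x y : F) : (x + y) ^+ (2 ^ k) = x ^+ (2 ^ k) + y ^+ (2 ^ k).
Proof. by apply: exprDn_pchar; rewrite pnatX (pnatE _ (pcharf_prime pchar2)) pchar2. Qed.

Lemma exp2n_sum k (I : Type) (r : seq I) (P : pred I) (f : I -> F) :
  (\sum_(j <- r | P j) f j) ^+ (2 ^ k) = \sum_(j <- r | P j) f j ^+ (2 ^ k).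
Proof.
by apply: (big_morph (fun x : F => x ^+ (2 ^ k))) => [x y|]; rewrite ?exp2nD // expr0n expn_eq0.
Qed.

Lemma sqr_char2_quadratic (z d d' : F) :
  ((z + d) * (z + d')) ^+ 2 = z ^+ 4 + (d + d') ^+ 2 * z ^+ 2 + d' ^+ 2 * d ^+ 2.
Proof.
have sqrD (u v : F) : (u + v) ^+ 2 = u ^+ 2 + v ^+ 2 := exp2nD 1 u v.
by rewrite exprMn !sqrD; ring.
Qed.

Variables C D : F.
Local Notation S := (Sseq C D).

Lemma Sseq0 : S 0 = 0. Proof. by []. Qed.
Lemma Sseq1 : S 1 = 1. Proof. by []. Qed.

Lemma SseqSS n : S n.+2 = C ^+ (2 ^ n) * S n.+1 + D ^+ (2 ^ n) * S n.
Proof. by []. Qed.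

Lemma Sseq_exp2n n k :
  S n.+2 ^+ (2 ^ k) = C ^+ (2 ^ (n + k)) * S n.+1 ^+ (2 ^ k) + D ^+ (2 ^ (n + k)) * S n ^+ (2 ^ k).
Proof. by rewrite SseqSS exp2nD !exprMn -!exprM -!expnD. Qed.

Lemma Sseq_dual n : S n.+2 = C * S n.+1 ^+ 2 + D ^+ 2 * S n ^+ 4.
Proof.
suff: S n.+2 = C * S n.+1 ^+ 2 + D ^+ 2 * S n ^+ 4 /\
      S n.+3 = C * S n.+2 ^+ 2 + D ^+ 2 * S n.+1 ^+ 4 by case.
elim: n => [|n [IHn IHn1]].
  by split; rewrite !SseqSS Sseq1 Sseq0 ?expn0 ?expn1; ring.
split=> //.
have := Sseq_exp2n n.+1 1; have := Sseq_exp2n n 2; rewrite !addn1 !addn2 expn1.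
rewrite (_ : 2 ^ 2 = 4)%N // => sq4 sq2.
rewrite [S n.+4]SseqSS sq2 sq4 IHn1 IHn.
set c := C ^+ _; set d := D ^+ _.
ring.
Qed.

Lemma Lpoly_exp2n A z n :
  Lpoly A C z ^+ (2 ^ n) = Lpoly (A ^+ (2 ^ n)) (C ^+ (2 ^ n)) (z ^+ (2 ^ n)).
Proof.
rewrite /Lpoly !exp2nD !exprMn.
set An := A ^+ _; set Cn := C ^+ _; set zn := z ^+ _.
ring.
Qed.

Lemma Lpoly_expansion A n z : D * A = 1 ->
  z = D * A ^+ (2 ^ n) * S n.+1 * z ^+ (2 ^ n) + D * A ^+ (2 ^ n) * S n * z ^+ (2 ^ n.+1)
      + \sum_(k < n) D * A ^+ (2 ^ k) * S k.+1 * Lpoly A C z ^+ (2 ^ k).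
Proof.
move=> DA; elim: n => [|n IHn].
  by rewrite big_ord0 expn0 expn1 !expr1 mulr1 mulr0 mul0r !addr0 DA mul1r.
have DAn : D ^+ (2 ^ n) * A ^+ (2 ^ n) = 1 by rewrite -exprMn DA expr1n.
rewrite big_ord_recr /= {1}IHn Lpoly_exp2n SseqSS (exp2nS z n.+1) (exp2nS z n) (exp2nS A n).
set W := \sum_(k < n) _; rewrite /Lpoly.
set An := A ^+ _ in DAn *; set Cn := C ^+ _; set Dn := D ^+ _ in DAn *; set zn := z ^+ _.
ring: (pcharf0 pchar2) DAn.
Qed.

Lemma Sseq_dual_expansion n z :
  \sum_(k < n.+1) (S (n - k) ^+ 2 * (z ^+ 4 + C * z ^+ 2 + D * z)) ^+ (2 ^ k)
  = z ^+ (2 ^ n.+1) + S n.+1 * z ^+ 2 + D * S n ^+ 2 * z.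
Proof.
elim: n => [|n IHn].
  by rewrite big_ord_recl big_ord0 /= Sseq0 Sseq1 expn0 expn1 expr1; ring: (pcharf0 pchar2).
rewrite big_ord_recl subn0.
under eq_bigr => k _ do rewrite subSS exp2nS.
rewrite -(exp2n_sum 1) expn1 IHn Sseq_dual /= expn0 expr1 !exp2nS.
set zn := z ^+ (2 ^ n).
ring: (pcharf0 pchar2).
Qed.
End Char2.

Lemma linearized_coef_eq0 (F : finFieldType) (q n : nat) (c : nat -> F) :
  #|F| = (q ^ 2)%N -> (2 ^ n < q)%N ->
  (forall x : F, \sum_(k < n.+1) c k * Tr q x ^+ (2 ^ k) = 0) ->
  forall k, (k <= n)%N -> c k = 0.
Proof.
move=> cardF n_lt_q vanish k k_le_n.
pose R : {poly F} := \sum_(j < n.+1) c j *: 'X^(2 ^ j).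
have q_gt1 : (1 < q)%N by apply: leq_ltn_trans n_lt_q; rewrite expn_gt0.
have size_Tr : size ('X^q + 'X : {poly F}) = q.+1.
  by rewrite size_polyDl ?size_polyXn ?size_polyX.
have size_R : (size R <= (2 ^ n).+1)%N.
  apply: (leq_trans (size_sum _ _ _)); apply/bigmax_leqP => j _.
  by rewrite (leq_trans (size_scale_leq _ _)) // size_polyXn ltnS leq_exp2l // -ltnS.
(* R \Po (X^q + X) has degree 2^n q < q^2 = #|F| and vanishes on F. *)
have /eqP : R \Po ('X^q + 'X) = 0.
  apply: (@roots_geq_poly_eq0 _ _ (enum F)); last 2 first.
  - exact: enum_uniq.
  - rewrite -cardE cardF (leq_trans (size_comp_poly_leq _ _)) // size_Tr /=.
    rewrite -mulnn ltn_mul2r (ltnW q_gt1) (leq_ltn_trans _ n_lt_q) //.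
    by rewrite -subn1 leq_subLR add1n.
  apply/allP => x _; rewrite /root horner_comp !hornerE horner_sum.
  by apply/eqP; rewrite -[RHS](vanish x); apply: eq_bigr => j _; rewrite hornerZ hornerXn addrC.
rewrite comp_poly_eq0 ?size_Tr ?ltnS ?(ltnW q_gt1) // => /eqP/(congr1 (coefp (2 ^ k))) /=.
rewrite coef0 coef_sum => <-.
under eq_bigr do rewrite coefZ coefXn eqn_exp2l // eq_sym mulr_natr mulrb.
by rewrite -big_mkcond big_ord1_eq ltnS k_le_n.
Qed.

Section CompositionalInverse.
Variables (F : finFieldType) (n i : nat) (b delta : F).
Hypotheses (cardF : #|F| = ((2 ^ n.+1) ^ 2)%N) (b_fixed : b ^+ (2 ^ n.+1) = b)
  (b_neq0 : b != 0) (delta_moved : delta ^+ (2 ^ n.+1) != delta).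

Local Notation q := (2 ^ n.+1)%N.
Local Notation t := (Tr q delta).
Local Notation A := (b * t ^+ (2 ^ i)).
Local Notation B := (A * delta ^+ (2 * q + 2)).
Local Notation C := (t ^+ 2).
Local Notation D := (A^-1).
Local Notation e := (2 * q + 2 ^ i + 2)%N.
Local Notation S := (Sseq C D).
Local Notation L := (Lpoly A C).
(* lambda = S_m + D S_(m-2)^2, since Sseq k = S_(k-1). *)
Local Notation lam := (S n.+2 + D * S n ^+ 2).

Lemma pchar2F : 2 \in [pchar F].
Proof. by apply: (@card_finPcharP _ 2 (n.+1 * 2)); rewrite // cardF expnM. Qed.

Lemma exp_qD (x y : F) : (x + y) ^+ q = x ^+ q + y ^+ q.
Proof. exact: (exp2nD pchar2F n.+1). Qed.

Lemma exp_qK (x : F) : x ^+ q ^+ q = x.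
Proof. by rewrite -exprM mulnn -cardF expf_card. Qed.

Lemma Tr_fixed (x : F) : Tr q x ^+ q = Tr q x.
Proof. by rewrite exp_qD exp_qK addrC. Qed.

Lemma Tr_eq0 (x : F) : (Tr q x == 0) = (x ^+ q == x).
Proof. by rewrite addr_eq0 (oppr_pchar2 pchar2F) eq_sym. Qed.

Lemma TrD (x y : F) : Tr q (x + y) = Tr q x + Tr q y.
Proof. by rewrite /Tr exp_qD addrACA. Qed.

Lemma TrMl (a x : F) : a ^+ q = a -> Tr q (a * x) = a * Tr q x.
Proof. by move=> aq; rewrite /Tr exprMn aq mulrDr. Qed.

Lemma t_neq0 : t != 0.
Proof. by rewrite Tr_eq0. Qed.

Lemma A_neq0 : A != 0.
Proof. by rewrite mulf_neq0 ?expf_neq0 ?t_neq0. Qed.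

Lemma A_fixed : A ^+ q = A.
Proof. by rewrite exprMn b_fixed exprAC Tr_fixed. Qed.

Lemma C_fixed : C ^+ q = C.
Proof. by rewrite exprAC Tr_fixed. Qed.

Lemma D_fixed : D ^+ q = D.
Proof. by rewrite exprVn A_fixed. Qed.

Lemma Lpoly_fixed (z : F) : z ^+ q = z -> L z ^+ q = L z.
Proof. by move=> zq; rewrite (Lpoly_exp2n pchar2F) A_fixed C_fixed zq. Qed.

Lemma Tr_exp_e (y : F) : Tr q (y ^+ e) = (y * y ^+ q) ^+ 2 * Tr q y ^+ (2 ^ i).
Proof.
have e_split (z : F) : z ^+ e = z ^+ q ^+ 2 * z ^+ (2 ^ i) * z ^+ 2.
  by rewrite exprD (exprD _ (2 * q)) mulnC exprM.
rewrite /Tr e_split !exprMn exprAC exp_qK (exprAC y (2 ^ i)) (exprAC y 2) (exp2nD pchar2F).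
set yq := y ^+ q; set yi := y ^+ (2 ^ i); set yqi := yq ^+ (2 ^ i).
ring.
Qed.

Variables P Pinv : F -> F.
Hypothesis P_def : forall x, P x = b * (x ^+ q + x + delta) ^+ e + x.
Hypothesis Pinv_def :
  forall x, Pinv x = x + b * (delta + inv_lin C D n.+1 (x ^+ q + x + B)) ^+ e.
Hypothesis P_bij : bijective P.

Lemma Tr_P x : Tr q (P x) = L (Tr q x) + B.
Proof.
rewrite P_def [x ^+ q + x]addrC -/(Tr q x) TrD TrMl // Tr_exp_e TrD.
have /eqP-> : Tr q (Tr q x) == 0 by rewrite Tr_eq0 Tr_fixed.
have -> : delta ^+ (2 * q + 2) = delta ^+ q ^+ 2 * delta ^+ 2 by rewrite exprD mulnC exprM.
rewrite add0r exp_qD Tr_fixed (sqr_char2_quadratic pchar2F) /Lpoly.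
move: (Tr q x) (t ^+ (2 ^ i)) => z ti; rewrite /Tr; move: (delta ^+ q) => dq.
ring.
Qed.

Lemma P_addK x s : s ^+ q = s -> P (x + s) = P x + s.
Proof.
move=> sq; rewrite !P_def addrA; congr (_ * (_ + delta) ^+ e + _ + _).
by rewrite exp_qD sq addrACA (addrr_pchar2 pchar2F) addr0.
Qed.

Lemma Tr_onto z : z ^+ q = z -> Tr q (z * (delta / t)) = z.
Proof.
move=> zq; rewrite TrMl // [delta / t]mulrC TrMl ?exprVn ?Tr_fixed //.
by rewrite mulVf ?t_neq0 // mulr1.
Qed.

Lemma Lpoly_inj_fixed z1 z2 : z1 ^+ q = z1 -> z2 ^+ q = z2 -> L z1 = L z2 -> z1 = z2.
Proof.
move=> z1q z2q eqL; set x1 := z1 * (delta / t); set x2 := z2 * (delta / t).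
have s_fixed : (P x1 + P x2) ^+ q = P x1 + P x2.
  apply/eqP; rewrite -Tr_eq0 TrD !Tr_P !Tr_onto // eqL.
  by rewrite (addrr_pchar2 pchar2F).
have /(bij_inj P_bij) : P (x2 + (P x1 + P x2)) = P x1.
  by rewrite P_addK // addrCA (addrr_pchar2 pchar2F) addr0.
move/(congr1 (Tr q)); rewrite TrD !Tr_onto //.
by move/eqP: s_fixed; rewrite -Tr_eq0 => /eqP->; rewrite addr0.
Qed.

Lemma Lpoly_onto_fixed w : w ^+ q = w -> exists2 z, z ^+ q = z & L z = w.
Proof.
move=> wq; pose K := [set z : F | z ^+ q == z].
have LK : L @: K = K.
  apply/eqP; rewrite eqEcard card_in_imset ?leqnn ?andbT.
    apply/subsetP => y /imsetP[z]; rewrite inE => /eqP zq ->.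
    by rewrite inE Lpoly_fixed.
  by move=> z1 z2; rewrite !inE => /eqP z1q /eqP z2q; apply: Lpoly_inj_fixed.
have : w \in L @: K by rewrite LK inE wq.
by case/imsetP => z; rewrite inE => /eqP zq ->; exists z.
Qed.

Lemma mulVA : D * A = 1.
Proof. exact: mulVf A_neq0. Qed.

Lemma Lpoly_expansion_fixed z : z ^+ q = z ->
  z = S n.+2 * z + S n.+1 * z ^+ 2 + \sum_(k < n.+1) D * A ^+ (2 ^ k) * S k.+1 * L z ^+ (2 ^ k).
Proof.
move=> zq; rewrite {1}(Lpoly_expansion pchar2F C n.+1 z mulVA) A_fixed (exp2nS z n.+1) zq.
by rewrite mulVA !mul1r.
Qed.

Lemma inv_lin_Lpoly z : z ^+ q = z -> inv_lin C D n.+1 (L z) = lam * z.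
Proof.
move=> zq; rewrite /inv_lin /inv_coef.
under eq_bigr => k _ do rewrite mulrDl subn1 /= exprMn_exp2nS (exprz_inv_1B _ A_neq0).
rewrite big_split /= mulVLpoly ?A_neq0 // (Sseq_dual_expansion pchar2F) zq.
move: (\sum_(k < n.+1) _) (Lpoly_expansion_fixed zq) => W zE.
have -> : W = z + (S n.+2 * z + S n.+1 * z ^+ 2).
  by rewrite {1}zE addrAC (addrr_pchar2 pchar2F) add0r.
move: (S n) (S n.+1) (S n.+2) => s0 s1 s2.
have two : (2 : F) = 0 := pcharf0 pchar2F.
ring: two.
Qed.

Lemma lam_idem : lam ^+ 2 = lam.
Proof.
have sqrD (u v : F) : (u + v) ^+ 2 = u ^+ 2 + v ^+ 2 := exp2nD pchar2F 1 u v.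
rewrite sqrD {1}SseqSS sqrD !(exprMn _ (_ ^+ (2 ^ n))) -!exp2nS C_fixed D_fixed.
rewrite [in RHS](Sseq_dual pchar2F).
move: (S n) (S n.+1) (A^-1) (Tr q delta) => s0 s1 d t'.
ring.
Qed.

Lemma lam_neq0 : lam != 0.
Proof.
apply/eqP => lam0; have n_lt_q : (2 ^ n < q)%N by rewrite ltn_exp2l.
have vanish_M x : \sum_(k < n.+1) inv_coef C D n.+1 k * Tr q x ^+ (2 ^ k) = 0.
  have [z zq <-] := Lpoly_onto_fixed (Tr_fixed x).
  by rewrite -[LHS]/(inv_lin C D n.+1 (L z)) inv_lin_Lpoly // lam0 mul0r.
have := linearized_coef_eq0 cardF n_lt_q vanish_M (leq0n n).
rewrite /inv_coef subn1 /= subn0 expn0 expr1 expn1 subrr expr0z mul1r Sseq1.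
move/eqP; rewrite addr_eq0 (oppr_pchar2 pchar2F) => /eqP DSn.
have := linearized_coef_eq0 cardF n_lt_q vanish_M (leqnn n).
rewrite /inv_coef subn1 /= subnn Sseq0 expr0n expn_eq0 mulr0 add0r (exprz_inv_1B _ A_neq0).
move/eqP; rewrite !mulf_eq0 invr_eq0 expf_eq0 (negbTE A_neq0) andbF /= => /eqP Sn1.
have vanish_W x : \sum_(k < n.+1) D * A ^+ (2 ^ k) * S k.+1 * Tr q x ^+ (2 ^ k) = 0.
  have [z zq <-] := Lpoly_onto_fixed (Tr_fixed x).
  apply: (addrI z); rewrite addr0 [in RHS](Lpoly_expansion_fixed zq) Sn1 mul0r addr0.
  by move/eqP: lam0; rewrite DSn addr_eq0 (oppr_pchar2 pchar2F) => /eqP->; rewrite mul1r.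
have := linearized_coef_eq0 (c := fun k => D * A ^+ (2 ^ k) * S k.+1)
  cardF n_lt_q vanish_W (leq0n n).
by rewrite expn0 expr1 mulVA Sseq1 mul1r => /eqP; rewrite oner_eq0.
Qed.

Lemma lam_eq1 : lam = 1.
Proof.
have /eqP : lam * (lam - 1) = 0 by rewrite mulrBr mulr1 -expr2 lam_idem subrr.
by rewrite mulf_eq0 subr_eq0 (negbTE lam_neq0) => /eqP.
Qed.

Lemma Pinv_P : cancel P Pinv.
Proof.
move=> x; rewrite Pinv_def [_ ^+ q + _]addrC -/(Tr q (P x)) Tr_P -addrA (addrr_pchar2 pchar2F).
rewrite addr0 inv_lin_Lpoly ?Tr_fixed // lam_eq1 mul1r P_def [x ^+ q + x]addrC -/(Tr q x).
by rewrite [delta + _]addrC addrAC (addrr_pchar2 pchar2F) add0r.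
Qed.

End CompositionalInverse.

Theorem theorem3p13 (F : finFieldType) (m i : nat) (b delta : F) :
  (0 < m)%N ->
  #|F| = ((2 ^ m) ^ 2)%N ->
  b ^+ (2 ^ m) = b -> b != 0 ->
  delta ^+ (2 ^ m) != delta ->
  let q := (2 ^ m)%N in
  let A := b * Tr q delta ^+ (2 ^ i) in
  let B := b * Tr q delta ^+ (2 ^ i) * delta ^+ (2 * q + 2) in
  let C := Tr q delta ^+ 2 in
  let D := A^-1 in
  let e := (2 * q + 2 ^ i + 2)%N in
  let P := fun x : F => b * (x ^+ q + x + delta) ^+ e + x in
  let Pinv := fun x : F =>
    x + b * (delta + \sum_(k < m)
      (D ^+ (2 ^ k) * Sseq C D (m - 1 - k) ^+ (2 ^ k.+1)
        + D ^ (1 - (2 ^ k)%:Z) * Sseq C D k.+1) * (x ^+ q + x + B) ^+ (2 ^ k)) ^+ e in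
  bijective P ->
  (forall c : F, P (Pinv c) = c) /\ (forall c : F, Pinv (P c) = c).
Proof.
case: m => [//|n] _ cardF b_fixed b_neq0 delta_moved q A B C D e P Pinv P_bij.
have PinvK : cancel P Pinv.
  exact: (Pinv_P cardF b_fixed b_neq0 delta_moved (fun=> erefl) (fun=> erefl) P_bij).
by split; [apply/(bij_can_sym P_bij) | ].
Qed.
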